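(* Let $\mathbf{F}=(F_1,\ldots,F_d)$ be a vector of finite simple graphs, all with exactly $n$ vertices, and let $n'' \geq n' \geq n$ be integers. Then for every positive integer $k$, \[E_{P^L_{\mathbf{F};n''}}\left({ n' \choose n} k \right) \le E_{P^L_{\mathbf{F};n'}}\left({ n'' \choose n } k \right).\]
   Context: For graphs $F,G$, $t^L(F,G)$ is the number of subgraphs of $G$ (not necessarily induced) isomorphic to $F$; write $t^L(\mathbf{F},G)=(t^L(F_1,G),\ldots,t^L(F_d,G))$. The lattice polytope of subgraph statistics is $P^L_{\mathbf{F};N}=\mathrm{conv}\{t^L(\mathbf{F},G)\mid G\text{ a graph on } N \text{ vertices}\}\subseteq\mathbb{R}^d$. For a lattice polytope $P\subseteq\mathbb{R}^d$ and a positive integer $k$, $E_P(k)$ is the number of points of $\mathbb{Z}^d$ in $kP=\{kp\mid p\in P\}$ (the Ehrhart polynomial of $P$). *)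

From HB Require Import structures.
From mathcomp Require Import all_boot all_order all_algebra.
From mathcomp Require Import finmap boolp classical_sets cardinality reals.
Set Implicit Arguments. Unset Strict Implicit. Unset Printing Implicit Defensive.
Import Order.TTheory GRing.Theory Num.Theory.
Local Open Scope ring_scope.
Local Open Scope fset_scope.

(* A finite simple graph on vertex set 'I_N is given by its edge set:
   a set of 2-element subsets of 'I_N. *)
Definition simple_graph (N : nat) (E : {set {set 'I_N}}) : bool :=
  [forall e in E, #|e| == 2%N].

Definition is_subgraph (N : nat) (G : {set {set 'I_N}})
    (p : {set 'I_N} * {set {set 'I_N}}) : bool :=
  (p.2 \subset G) && [forall e in p.2, e \subset p.1].

Definition iso_to (n N : nat) (F : {set {set 'I_n}})
    (p : {set 'I_N} * {set {set 'I_N}}) : bool :=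
  [exists f : {ffun 'I_n -> 'I_N},
     [&& injectiveb f, f @: [set: 'I_n] == p.1 &
         p.2 == [set f @: e | e : {set 'I_n} in F]]].

(* t^L(F,G): number of (not necessarily induced) subgraphs of G isomorphic to F *)
Definition tL (n N : nat) (F : {set {set 'I_n}}) (G : {set {set 'I_N}}) : nat :=
  #|[set p : {set 'I_N} * {set {set 'I_N}} | is_subgraph G p && iso_to F p]|.

Definition tLvec (R : pzRingType) (d n N : nat) (F : 'I_d -> {set {set 'I_n}})
    (G : {set {set 'I_N}}) : 'rV[R]_d :=
  \row_i ((tL (F i) G)%:R : R).

(* x lies in k * P^L_{F;N}, where P^L_{F;N} is the convex hull of the t^L(F,G)
   over all (simple) graphs G on N vertices *)
Definition in_dilated_polytope (R : realType) (d n N k : nat)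
    (F : 'I_d -> {set {set 'I_n}}) (x : 'rV[R]_d) : Prop :=
  exists lam : {set {set 'I_N}} -> R,
    [/\ (forall G, 0 <= lam G),
        (forall G, ~~ simple_graph G -> lam G = 0),
        \sum_G lam G = 1 &
        x = k%:R *: \sum_G (lam G *: tLvec R F G)].

Definition ehrhart (R : realType) (d n N : nat) (F : 'I_d -> {set {set 'I_n}})
    (k : nat) : nat :=
  #|` fset_set [set z : 'rV[int]_d |
                  in_dilated_polytope N k F (map_mx (fun a : int => a%:~R : R) z)] |.

From HB Require Import structures.
From mathcomp Require Import all_boot all_order all_algebra.
From mathcomp Require Import zify ring.
Set Implicit Arguments. Unset Strict Implicit. Unset Printing Implicit Defensive.

(* Every copy of F in a graph G on N vertices lies in exactly C(N - n, m - n)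
   of the induced subgraphs G[S] on m-subsets S, so the average of t(F, G[S])
   over the C(N, m) such S is C(N - n, m - n) / C(N, m) * t(F, G), which equals
   C(m, n) / C(N, n) * t(F, G).  Pushing a convex combination of the points
   t(F, G) forward along G |-> G[S] therefore gives
   C(m, n) P_{F;N} <= C(N, n) P_{F;m}; dilating by k and counting lattice
   points yields the Ehrhart inequality. *)

Definition copy_of n N (F : {set {set 'I_n}}) (f : 'I_n -> 'I_N) :
    {set 'I_N} * {set {set 'I_N}} :=
  (f @: [set: _], [set f @: e | e : {set _} in F]).

Lemma iso_toP n N (F : {set {set 'I_n}}) (p : {set 'I_N} * {set {set 'I_N}}) :
  reflect (exists2 f : 'I_n -> 'I_N, injective f & p = copy_of F f) (iso_to F p).
Proof.
apply: (iffP existsP) => [[f /and3P[/injectiveP f_inj /eqP f1 /eqP f2]]|[f f_inj ->]].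
  by exists f => //; case: p f1 f2 => p1 p2 /= <- ->.
exists [ffun i => f i]; rewrite /copy_of /=; apply/and3P; split.
- by apply/injectiveP => i j; rewrite !ffunE => /f_inj.
- by apply/eqP/eq_imset => i; rewrite ffunE.
- by apply/eqP/eq_imset => e; apply/eq_imset => i; rewrite ffunE.
Qed.

Lemma card_copy_vertices n N (F : {set {set 'I_n}}) (f : 'I_n -> 'I_N) :
  injective f -> #|(copy_of F f).1| = n.
Proof. by move=> f_inj; rewrite card_imset // cardsT card_ord. Qed.

Lemma copy_of_subgraph n N (F : {set {set 'I_n}}) (f : 'I_n -> 'I_N) G :
  is_subgraph G (copy_of F f) = ([set f @: e | e : {set _} in F] \subset G).
Proof.
rewrite /is_subgraph andb_idr // => _.
by apply/forall_inP => _ /imsetP[e _ ->]; rewrite imsetS ?subsetT.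
Qed.

Lemma copy_of_comp n m N (F : {set {set 'I_n}}) (g : 'I_m -> 'I_N)
    (f : 'I_n -> 'I_m) :
  copy_of F (g \o f) =
  (g @: (copy_of F f).1, [set g @: e | e : {set _} in (copy_of F f).2]).
Proof.
rewrite /copy_of /= imset_comp -imset_comp; congr (_, _).
rewrite -imset_comp; apply: eq_imset => e /=; exact: imset_comp.
Qed.

Lemma eq_copy_of n N (F : {set {set 'I_n}}) (f1 f2 : 'I_n -> 'I_N) :
  f1 =1 f2 -> copy_of F f1 = copy_of F f2.
Proof.
move=> ef; rewrite /copy_of (eq_imset _ ef); congr (_, _).
by apply: eq_imset => e; apply: eq_imset.
Qed.

Definition copies n N (F : {set {set 'I_n}}) (G : {set {set 'I_N}}) :=
  [set p : {set 'I_N} * {set {set 'I_N}} | is_subgraph G p && iso_to F p].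

Definition induced m N (G : {set {set 'I_N}}) (g : 'I_m -> 'I_N) : {set {set 'I_m}} :=
  [set e : {set 'I_m} | (#|e| == 2) && (g @: e \in G)].

Lemma induced_simple m N (G : {set {set 'I_N}}) (g : 'I_m -> 'I_N) :
  simple_graph (induced G g).
Proof. by apply/forall_inP => e; rewrite inE => /andP[]. Qed.

Section InducedCopies.

Variables (n m N : nat) (F : {set {set 'I_n}}) (G : {set {set 'I_N}}).
Variable g : 'I_m -> 'I_N.
Hypotheses (F_simple : simple_graph F) (g_inj : injective g).

Lemma induced_copy_subgraph (h : 'I_n -> 'I_m) : injective h ->
  is_subgraph (induced G g) (copy_of F h) = is_subgraph G (copy_of F (g \o h)).
Proof.
move=> h_inj; rewrite !copy_of_subgraph.
apply/subsetP/subsetP => sub _ /imsetP[e eF ->].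
  by rewrite imset_comp; have := sub _ (imset_f _ eF); rewrite inE => /andP[].
rewrite inE card_imset // (forall_inP F_simple) //= -imset_comp.
exact/sub/imset_f.
Qed.

Lemma tL_induced :
  tL F (induced G g) = #|[set p in copies F G | p.1 \subset g @: [set: _]]|.
Proof.
pose img (q : {set 'I_m} * {set {set 'I_m}}) :=
  (g @: q.1, [set g @: e | e : {set 'I_m} in q.2]).
have img_inj : injective img.
  by move=> [a1 b1] [a2 b2] [/(imset_inj g_inj) -> /(imset_inj (imset_inj g_inj)) ->].
rewrite /tL -(card_imset _ img_inj); apply: eq_card => p; rewrite !inE.
apply/imsetP/idP => [[q]|/andP[/andP[p_sub /iso_toP[f f_inj p_def]] p_im]].
  rewrite inE => /andP[q_sub /iso_toP[h h_inj q_def]] ->; subst q.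
  move: q_sub; rewrite /img -copy_of_comp induced_copy_subgraph // => ->.
  apply/andP; split; first by apply/iso_toP; exists (g \o h) => //; exact: inj_comp.
  by rewrite /= imset_comp imsetS ?subsetT.
have f_codom i : f i \in codom g.
  have /subsetP/(_ (f i)) := p_im; rewrite p_def imset_f // => /(_ isT).
  by case/imsetP=> j _ ->; exact: codom_f.
pose h i := iinv (f_codom i).
have gh : g \o h =1 f by move=> i; exact: f_iinv.
have h_inj : injective h by move=> i j /(congr1 g); rewrite -!/((g \o h) _) !gh => /f_inj.
exists (copy_of F h); last by rewrite /img -copy_of_comp (eq_copy_of _ gh).
rewrite inE induced_copy_subgraph // (eq_copy_of _ gh) -p_def p_sub /=.
by apply/iso_toP; exists h.
Qed.

End InducedCopies.

Lemma card_supersets (T : finType) (V : {set T}) b : #|V| <= b ->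
  #|[set S : {set T} | V \subset S & #|S| == b]| = 'C(#|T| - #|V|, b - #|V|).
Proof.
move=> le_Vb; rewrite -[#|T|](cardsC V) addKn -cards_draws.
rewrite -(card_in_imset (f := fun S => S :\: V)); last first.
  move=> S1 S2; rewrite !inE => /andP[VS1 _] /andP[VS2 _] eqD.
  by rewrite -(setID S1 V) -(setID S2 V) (setIidPr VS1) (setIidPr VS2) eqD.
apply: eq_card => X; rewrite inE; apply/imsetP/andP => [[S]|[XV /eqP cX]].
  rewrite inE => /andP[VS /eqP cS] ->; split; first by rewrite subsetDr.
  by rewrite cardsD (setIidPr VS) cS.
have XV0 : [disjoint X & V] by rewrite -[V]setCK -subsets_disjoint.
exists (V :|: X); last by rewrite setDUl setDv set0U; apply/esym/setDidPl.
rewrite inE subsetUl cardsU disjoint_setI0 1?disjoint_sym //.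
by rewrite cards0 subn0 cX subnKC ?eqxx.
Qed.

Lemma mul_bin_bin N m a : a <= m -> m <= N ->
  'C(N, m) * 'C(m, a) = 'C(N, a) * 'C(N - a, m - a).
Proof.
move=> le_am le_mN; have le_aN := leq_trans le_am le_mN.
have fact_pos : 0 < a`! * (m - a)`! * (N - m)`! by rewrite !muln_gt0 !fact_gt0.
apply/eqP; rewrite -(eqn_pmul2r fact_pos); apply/eqP.
have -> : 'C(N, m) * 'C(m, a) * (a`! * (m - a)`! * (N - m)`!) = N`!.
  by rewrite -(bin_fact le_mN) -(bin_fact le_am); ring.
have le_sub : m - a <= N - a by rewrite leq_sub2r.
have sub_sub : N - a - (m - a) = N - m by lia.
rewrite -(bin_fact le_aN) -(bin_fact le_sub) sub_sub; ring.
Qed.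

Section Relabel.

Variables (m N : nat) (le_mN : m <= N).

(* The default value is never read when #|S| = m, the only case used. *)
Definition relabel (S : {set 'I_N}) (i : 'I_m) : 'I_N :=
  nth (widen_ord le_mN i) (enum S) i.

Variable S : {set 'I_N}.
Hypothesis card_S : #|S| = m.

Lemma relabel_inj : injective (relabel S).
Proof.
move=> i j; rewrite /relabel (set_nth_default (widen_ord le_mN i)) -?cardE ?card_S //.
by move/eqP; rewrite nth_uniq ?enum_uniq -?cardE ?card_S // => /eqP/val_inj.
Qed.

Lemma relabel_image : relabel S @: [set: _] = S.
Proof.
apply/setP => x; apply/imsetP/idP => [[i _ ->]|xS].
  by rewrite -mem_enum mem_nth // -cardE card_S.
have lt_xm : index x (enum S) < m by rewrite -card_S cardE index_mem mem_enum.
by exists (Ordinal lt_xm); rewrite // /relabel /= nth_index ?mem_enum.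
Qed.

End Relabel.

Lemma sum_tL_induced n m N (le_nm : n <= m) (le_mN : m <= N)
    (F : {set {set 'I_n}}) (G : {set {set 'I_N}}) :
  simple_graph F ->
  \sum_(S : {set 'I_N} | #|S| == m) tL F (induced G (relabel le_mN S)) =
  'C(N - n, m - n) * tL F G.
Proof.
move=> F_simple.
transitivity (\sum_(S : {set 'I_N} | #|S| == m)
                \sum_(p in copies F G) (p.1 \subset S : nat)).
  apply: eq_bigr => S /eqP card_S.
  rewrite (tL_induced G F_simple (relabel_inj card_S)) relabel_image //.
  rewrite -sum1_card big_mkcond [RHS]big_mkcond.
  by apply: eq_bigr => p _; rewrite inE; case: (_ \in _).
rewrite exchange_big /tL -/(copies F G) mulnC -sum_nat_const; apply: eq_bigr => p.
rewrite inE => /andP[_ /iso_toP[f f_inj ->]].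
move: (card_copy_vertices F f_inj); set V := (copy_of F f).1 => card_V.
have := @card_supersets _ V m; rewrite card_ord card_V => <- //.
rewrite -sum1_card big_mkcond [RHS]big_mkcond; apply: eq_bigr => S _.
by rewrite inE; case: (V \subset S); case: (#|S| == m).
Qed.

From mathcomp Require Import finmap boolp classical_sets cardinality reals.
Import Order.TTheory GRing.Theory Num.Theory.
Local Open Scope classical_set_scope.
Local Open Scope ring_scope.

Lemma sum_pushforward (R : pzRingType) (V : lmodType R) (I J : finType)
    (P : pred I) (f : I -> J) (w : I -> R) (v : J -> V) :
  \sum_j (\sum_(i | P i && (f i == j)) w i) *: v j = \sum_(i | P i) w i *: v (f i).
Proof.
rewrite (partition_big f xpredT) //=; apply: eq_bigr => j _.
by rewrite scaler_suml; apply: eq_bigr => i /andP[_ /eqP ->].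
Qed.

Lemma sum_tLvec_induced (R : pzRingType) d n m N
    (le_nm : (n <= m)%N) (le_mN : (m <= N)%N)
    (F : 'I_d -> {set {set 'I_n}}) (G : {set {set 'I_N}}) :
  (forall i, simple_graph (F i)) ->
  \sum_(S : {set 'I_N} | #|S| == m) tLvec R F (induced G (relabel le_mN S)) =
  'C(N - n, m - n)%:R *: tLvec R F G.
Proof.
move=> F_simple; apply/rowP => i; rewrite summxE !mxE.
under eq_bigr do rewrite mxE.
by rewrite -natr_sum sum_tL_induced // natrM.
Qed.

Lemma dilated_polytope_sub (R : realType) d n m N (F : 'I_d -> {set {set 'I_n}})
    (le_nm : (n <= m)%N) (le_mN : (m <= N)%N) k (x : 'rV[R]_d) :
  (forall i, simple_graph (F i)) ->
  in_dilated_polytope N ('C(m, n) * k) F x ->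
  in_dilated_polytope m ('C(N, n) * k) F x.
Proof.
move=> F_simple [lam [lam_ge0 _ lam_sum1 ->]].
pose c : R := 'C(N, m)%:R.
have c_neq0 : c != 0 by rewrite pnatr_eq0 -lt0n bin_gt0.
pose sub (GS : {set {set 'I_N}} * {set 'I_N}) := induced GS.1 (relabel le_mN GS.2).
pose mu (H : {set {set 'I_m}}) :=
  \sum_(GS : {set {set 'I_N}} * {set 'I_N} | (#|GS.2| == m) && (sub GS == H))
    c^-1 * lam GS.1.
have push (V : lmodType R) (v : {set {set 'I_m}} -> V) :
    \sum_H mu H *: v H =
    c^-1 *: \sum_G lam G *: \sum_(S : {set 'I_N} | #|S| == m) v (sub (G, S)).
  rewrite sum_pushforward scaler_sumr.
  under [RHS]eq_bigr do rewrite scaler_sumr scaler_sumr.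
  by rewrite pair_big; apply: eq_bigr => GS _; rewrite scalerA.
exists mu; split.
- by move=> H; apply: sumr_ge0 => GS _; rewrite mulr_ge0 ?invr_ge0 ?ler0n.
- move=> H H_not_simple; apply: big1 => GS /andP[_ /eqP sub_GS].
  by move: H_not_simple; rewrite -sub_GS induced_simple.
- have card_msets : #|[pred S : {set 'I_N} | #|S| == m]| = 'C(N, m).
    have := card_draws 'I_N m; rewrite card_ord => <-.
    by apply: eq_card => S; rewrite inE.
  rewrite -(partition_big sub xpredT) //= -mulr_sumr.
  rewrite -(pair_big xpredT (fun S : {set 'I_N} => #|S| == m) (fun G _ => lam G)).
  under eq_bigr do rewrite sumr_const card_msets -mulr_natr.
  by rewrite -mulr_suml lam_sum1 mul1r mulVf.
rewrite push; under [X in _ *: (_ *: X)]eq_bigr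
  do rewrite sum_tLvec_induced // scalerA mulrC -scalerA.
rewrite -scaler_sumr !scalerA; congr (_ *: _).
have bin_eq : c * 'C(m, n)%:R = 'C(N, n)%:R * 'C(N - n, m - n)%:R :> R.
  by rewrite -!natrM mul_bin_bin.
apply: (mulfI c_neq0); rewrite !natrM.
transitivity ('C(N, n)%:R * 'C(N - n, m - n)%:R * k%:R : R).
  by rewrite -bin_eq; ring.
by field.
Qed.

Lemma card_fset_set_le (T : choiceType) (A B : set T) :
  finite_set B -> A `<=` B -> (#|` fset_set A| <= #|` fset_set B|)%N.
Proof.
move=> finB AB; apply: fsubset_leq_card.
by rewrite -fset_set_sub //; exact: sub_finite_set finB.
Qed.

Lemma dilated_polytope_coord_bound (R : realType) d n N K (F : 'I_d -> {set {set 'I_n}})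
    (x : 'rV[R]_d) :
  in_dilated_polytope N K F x -> forall j,
  0 <= x 0 j <= (K * #|{: {set 'I_N} * {set {set 'I_N}}}|)%:R.
Proof.
move=> [lam [lam_ge0 _ lam_sum1 ->]] j; rewrite mxE summxE.
under eq_bigr do rewrite !mxE.
rewrite mulr_ge0 ?ler0n ?sumr_ge0 //=; last by move=> G _; rewrite mulr_ge0 ?ler0n.
rewrite natrM ler_wpM2l ?ler0n // -[X in _ <= X]mul1r.
rewrite -[X in _ <= X * _]lam_sum1 mulr_suml.
by apply: ler_sum => G _; rewrite ler_wpM2l // ler_nat max_card.
Qed.

(* Needed because [fset_set] is empty on infinite sets. *)
Lemma finite_dilated_polytope_points (R : realType) d n N K
    (F : 'I_d -> {set {set 'I_n}}) :
  finite_set [set z : 'rV[int]_d |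
    in_dilated_polytope N K F (map_mx (fun a : int => a%:~R : R) z)].
Proof.
pose B := (K * #|{: {set 'I_N} * {set {set 'I_N}}}|)%N.
pose embed (w : 'rV['I_B.+1]_d) := map_mx (fun i : 'I_B.+1 => (i : nat)%:Z) w.
apply: (sub_finite_set _ (finite_image embed (@finite_finset _ setT))).
move=> z /= /dilated_polytope_coord_bound z_bound.
exists (map_mx (fun a : int => inord `|a|%N) z) => //.
apply/rowP => j; have /andP[z_ge0 z_le] := z_bound j; rewrite !mxE in z_ge0 z_le.
rewrite !mxE inordK; first by rewrite gez0_abs // -(ler0z R).
by rewrite ltnS -lez_nat gez0_abs -?(ler0z R) // -(ler_int R).
Qed.

Local Close Scope ring_scope.

(* The inequality also holds for k = 0. *)

Theorem proposition2p8 (R : realType) (d n n' n'' : nat)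
    (F : 'I_d -> {set {set 'I_n}})
    (HF : forall i, simple_graph (F i))
    (Hn' : (n <= n')%N) (Hn'' : (n' <= n'')%N)
    (k : nat) (Hk : (0 < k)%N) :
  (ehrhart R n'' F ('C(n', n) * k) <= ehrhart R n' F ('C(n'', n) * k))%N.
Proof.
apply: card_fset_set_le; first exact: finite_dilated_polytope_points.
by move=> z; apply: dilated_polytope_sub.
Qed.
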